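(* Consider a buyer with linear valuation $v(\mathbf{x})=\sum_{j=1}^m\tau_jx_j$ ($\tau_j\ge0$) and budget $b\in\mathbb{R}_{\ge0}$. Let $\mathbf{p}$ be a monotone lower-continuous pricing function and $\hat{\mathbf{p}}=\mathrm{conv}(\mathbf{p})$. Then $r(\hat{\mathbf{p}}\mid v,b)\ge r(\mathbf{p}\mid v,b)$.
   Context: A pricing function is a monotone $\mathbf{p}:[0,1]^m\to\mathbb{R}_{\ge0}$ with $\mathbf{p}(\mathbf{0})=0$. For budget $b\in\mathbb{R}_{\ge0}\cup\{\infty\}$: $F(\mathbf{p}\mid b)=\{\mathbf{x}:\mathbf{p}(\mathbf{x})\le b\}$; $u^*=\sup_{\mathbf{x}\in F}(v(\mathbf{x})-\mathbf{p}(\mathbf{x}))$; $\mathrm{Dem}(\mathbf{p}\mid v,b)=\{\mathbf{x}\in F:v(\mathbf{x})-\mathbf{p}(\mathbf{x})=u^*\}$; $r(\mathbf{p}\mid v,b)=\sup_{\mathbf{x}\in\mathrm{Dem}}\mathbf{p}(\mathbf{x})$. $\mathrm{conv}(\mathbf{p})(\mathbf{x})=\inf U(\mathbf{x})$ where $U(\mathbf{x})$ is the set of $y$ for which there exist $k\in\mathbb{N}$, $\lambda\in[0,1]^k$ with $\sum\lambda_i=1$, and $\mathbf{x}^{(i)}\in[0,1]^m$ with $\mathbf{x}=\sum\lambda_i\mathbf{x}^{(i)}$ and $y\ge\sum\lambda_i\mathbf{p}(\mathbf{x}^{(i)})$. Lower-continuous: $f(\hat{\mathbf{x}})=\sup_{\delta>0}\inf_{\|\mathbf{x}-\hat{\mathbf{x}}\|_\infty\le\delta}f(\mathbf{x})$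 for all $\hat{\mathbf{x}}$. *)

From HB Require Import structures.
From mathcomp Require Import all_boot all_order all_algebra.
From mathcomp Require Import boolp classical_sets reals constructive_ereal ereal.
Set Implicit Arguments. Unset Strict Implicit. Unset Printing Implicit Defensive.
Import Order.TTheory GRing.Theory Num.Theory.
Local Open Scope classical_set_scope.
Local Open Scope ring_scope.

Section Pricing.
Variables (R : realType) (m : nat).

Definition cube : set ('I_m -> R) := [set x | forall j, 0 <= x j <= 1].

Definition vle (x y : 'I_m -> R) := forall j, x j <= y j.

Definition pricing_function (p : ('I_m -> R) -> R) : Prop :=
  [/\ forall x, cube x -> 0 <= p x,
      forall x y, cube x -> cube y -> vle x y -> p x <= p y
    & p (fun _ => 0) = 0].

Definition linval (tau : 'I_m -> R) (x : 'I_m -> R) : R := \sum_(j < m) tau j * x j.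

Definition feasible (p : ('I_m -> R) -> R) (b : R) : set ('I_m -> R) :=
  [set x | cube x /\ p x <= b].

Definition ustar (p v : ('I_m -> R) -> R) (b : R) : \bar R :=
  ereal_sup [set ((v x - p x)%:E) | x in feasible p b].

Definition demand (p v : ('I_m -> R) -> R) (b : R) : set ('I_m -> R) :=
  [set x | feasible p b x /\ (v x - p x)%:E = ustar p v b].

(* revenue r(p | v, b) = sup over Dem of p (= -oo if Dem is empty) *)
Definition revenue (p v : ('I_m -> R) -> R) (b : R) : \bar R :=
  ereal_sup [set (p x)%:E | x in demand p v b].

Definition conv_upper (p : ('I_m -> R) -> R) (x : 'I_m -> R) : set R :=
  [set y | exists (k : nat) (lam : 'I_k -> R) (xs : 'I_k -> 'I_m -> R),
      [/\ forall i, 0 <= lam i <= 1,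
          \sum_(i < k) lam i = 1,
          forall i, cube (xs i),
          x = (fun j => \sum_(i < k) lam i * xs i j)
        & \sum_(i < k) lam i * p (xs i) <= y]].

Definition conv (p : ('I_m -> R) -> R) (x : 'I_m -> R) : R := inf (conv_upper p x).

Definition lower_continuous (f : ('I_m -> R) -> R) : Prop :=
  forall xh, cube xh ->
    f xh = sup [set inf [set f x | x in [set x | cube x /\
                                       forall j, `|x j - xh j| <= d]]
               | d in [set d : R | 0 < d]].

End Pricing.

From HB Require Import structures.
From mathcomp Require Import all_boot all_order all_algebra.
From mathcomp Require Import boolp classical_sets reals constructive_ereal ereal.
From mathcomp Require Import topology normedtype.
From mathcomp Require Import ring lra.
Import Order.TTheory GRing.Theory Num.Theory.
Import numFieldNormedType.Exports.
Local Open Scope classical_set_scope.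
Local Open Scope ring_scope.
Set Implicit Arguments. Unset Strict Implicit. Unset Printing Implicit Defensive.

(* Let [x] be demanded under [p] and let [U] be the optimal utility under
   [conv p <= p].  A near-optimal bundle for [conv p] is a convex combination of
   bundles whose average [p]-cost is at most [b]; as the budget is a single linear
   constraint, two bundles suffice, so near-optimal utilities are realized by
   points (t, f, g) of the compact set [0,1] x [0,1]^m x [0,1]^m.  Lower continuity
   of [p] makes the cost of (t, f, g) lower semicontinuous and the utility is
   continuous, so a cluster point yields a mixture [y] of two bundles that attains
   [U]: it is demanded under [conv p], with [conv p y = t p(f) + (1-t) p(g)].
   When [U] exceeds the utility of [x], every [p]-affordable bundle is worth less
   than [U]; so if this cost were below [b], shifting weight toward an endpoint
   that [p] makes unaffordable would raise the utility above [U].  Hence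
   [conv p y >= b >= p x].  Otherwise [x] itself is demanded under [conv p]. *)

Section Mixtures.
Variable R : realFieldType.

Definition mix (t a b : R) := t * a + (1 - t) * b.

Lemma mix1 a b : mix 1 a b = a.
Proof. by rewrite /mix subrr mul0r addr0 mul1r. Qed.

Lemma mixC t a b : mix t a b = mix (1 - t) b a.
Proof. by rewrite /mix; ring. Qed.

Lemma mixB t a b c d : mix t a b - mix t c d = mix t (a - c) (b - d).
Proof. by rewrite /mix; ring. Qed.

Lemma mix_le t a b c : 0 <= t <= 1 -> a <= c -> b <= c -> mix t a b <= c.
Proof. by rewrite /mix => /andP [t0 t1] ac bc; nra. Qed.

Lemma mix_ge t a b c : 0 <= t <= 1 -> c <= a -> c <= b -> c <= mix t a b.
Proof. by rewrite /mix => /andP [t0 t1] ac bc; nra. Qed.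

Lemma norm_mix_le t a b e : 0 <= t <= 1 -> `|a| <= e -> `|b| <= e -> `|mix t a b| <= e.
Proof.
move=> /andP [t0 t1]; rewrite !ler_norml /mix => /andP [a1 a2] /andP [b1 b2].
by apply/andP; split; nra.
Qed.

Lemma mix_perturb t t' a b a' b' :
  mix t' a' b' - mix t a b = mix t' (a' - a) (b' - b) + (t' - t) * (a - b).
Proof. by rewrite /mix; ring. Qed.

Lemma mul_small (K eta : R) : 0 <= K -> 0 < eta ->
  exists2 d, 0 < d & forall x : R, `|x| <= d -> `|x| * K <= eta.
Proof.
move=> K0 eta0; exists (eta / (K + 1)) => [|x xd]; first by rewrite divr_gt0 // ltr_wpDl.
apply: le_trans (_ : eta / (K + 1) * (K + 1) <= eta); last by rewrite divfK ?gt_eqF ?ltr_wpDl.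
by rewrite ler_pM ?normr_ge0 // lerDl.
Qed.

Lemma wsumr_lt0 (I : finType) (P : pred I) (lam g : I -> R) :
  (forall i, P i -> 0 <= lam i) -> (forall i, P i -> g i < 0) ->
  0 < \sum_(i | P i) lam i -> \sum_(i | P i) lam i * g i < 0.
Proof.
move=> lam0 g0 /lt0r_neq0 /eqP /(psumr_neq0P lam0) [i0 /andP [Pi0 lami0]].
rewrite (bigD1 i0) //=.
have : \sum_(i | P i && (i != i0)) lam i * g i <= 0.
  by apply: sumr_le0 => i /andP [Pi _]; rewrite mulr_ge0_le0 ?lam0 ?ltW ?g0.
have : lam i0 * g i0 < 0 by rewrite pmulr_rlt0 ?g0.
lra.
Qed.

Lemma wsumr_eq0 (I : finType) (P : pred I) (lam g : I -> R) :
  (forall i, P i -> 0 <= lam i) -> \sum_(i | P i) lam i <= 0 ->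
  \sum_(i | P i) lam i * g i = 0.
Proof.
move=> lam0 sum_le0.
have sum0 : \sum_(i | P i) lam i = 0 by apply/eqP; rewrite eq_le sum_le0 sumr_ge0.
by apply: big1 => i Pi; rewrite (psumr_eq0P lam0 sum0) // mul0r.
Qed.

(* The point of [c i, c j] at abscissa B has weight t = (c j - B) / (c j - c i) on i. *)
Lemma mix_at_budget (ci cj wi wj B W : R) : ci <= B < cj ->
  0 <= (cj - B) * (wi - W) + (B - ci) * (wj - W) ->
  exists t, [/\ 0 <= t <= 1, mix t ci cj <= B & W <= mix t wi wj].
Proof.
move=> /andP [ciB Bcj] pair_ge0; have dc : 0 < cj - ci by lra.
exists ((cj - B) / (cj - ci)); split.
- by rewrite divr_ge0 ?ler_pdivrMr ?mul1r; lra.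
- suff -> : mix ((cj - B) / (cj - ci)) ci cj = B by [].
  by rewrite /mix; field; rewrite gt_eqF.
- rewrite -subr_ge0.
  suff -> : mix ((cj - B) / (cj - ci)) wi wj - W =
      ((cj - B) * (wi - W) + (B - ci) * (wj - W)) / (cj - ci).
    by rewrite divr_ge0 // ltW.
  by rewrite /mix; field; rewrite gt_eqF.
Qed.

Lemma mix_shift_toward_snd (pf pg vf vg t b U : R) : 0 <= t <= 1 -> pf <= b -> b < pg ->
  vf - pf < U -> mix t pf pg < b -> U <= mix t vf vg - mix t pf pg ->
  exists2 s, 0 <= s <= 1 /\ mix s pf pg <= b & U < mix s vf vg - mix s pf pg.
Proof.
move=> /andP [t0 t1] pfb bpg vf_lt cost_lt value_ge.
have t_gt0 : 0 < t.
  by rewrite lt_neqAle t0 andbT; apply/eqP => t00; move: cost_lt; rewrite -t00 /mix; lra.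
have vg_gt : U < vg - pg.
  rewrite ltNge; apply/negP => vg_le; move: value_ge; rewrite mixB /mix; nra.
have dp : 0 < pg - pf by rewrite subr_gt0; lra.
pose sg := Num.min t ((b - mix t pf pg) / (pg - pf)).
have sg_gt0 : 0 < sg by rewrite /sg lt_min t_gt0 divr_gt0 // subr_gt0.
have [sg_le_t sg_cost] : sg <= t /\ sg * (pg - pf) <= b - mix t pf pg.
  by rewrite -ler_pdivlMr // /sg !ge_min !lexx orbT.
move: value_ge sg_cost; rewrite /mix => value_ge sg_cost.
by exists (t - sg); [split; [apply/andP; split|] | ]; nra.
Qed.

(* Otherwise either both endpoints are affordable, and the mixture is worth at
   most [Us], or [mix_shift_toward_snd] applies toward the unaffordable one. *)
Lemma mix_exhausts_budget (pf pg vf vg t b U Us : R) : 0 <= t <= 1 -> Us < U ->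
  (pf <= b -> vf - pf <= Us) -> (pg <= b -> vg - pg <= Us) ->
  U <= mix t vf vg - mix t pf pg ->
  (forall s, 0 <= s <= 1 -> mix s pf pg <= b -> mix s vf vg - mix s pf pg <= U) ->
  b <= mix t pf pg.
Proof.
move=> t01 Us_lt f_opt g_opt value_ge mix_opt; rewrite leNgt; apply/negP => cost_lt.
have [t0 t1] := andP t01; have t'01 : 0 <= 1 - t <= 1 by apply/andP; split; lra.
case: (lerP pf b) => pfb; case: (lerP pg b) => pgb.
- have := mix_le t01 (f_opt pfb) (g_opt pgb).
  by rewrite -mixB; lra.
- have [s [s01 s_cost] s_value] := mix_shift_toward_snd t01 pfb pgb
    (le_lt_trans (f_opt pfb) Us_lt) cost_lt value_ge.
  by have := mix_opt s s01 s_cost; lra.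
- rewrite mixC in cost_lt; rewrite [mix t vf _]mixC [mix t pf _]mixC in value_ge.
  have [s [s01 s_cost] s_value] := mix_shift_toward_snd t'01 pgb pfb
    (le_lt_trans (g_opt pgb) Us_lt) cost_lt value_ge.
  have s'01 : 0 <= 1 - s <= 1 by case/andP: s01 => ? ?; apply/andP; split; lra.
  have := mix_opt (1 - s) s'01; rewrite !(mixC (1 - s)) subKr.
  by move=> /(_ s_cost); lra.
- by have := mix_ge t01 (ltW pfb) (ltW pgb); lra.
Qed.

Section TwoPointReduction.
Variables (I : finType) (lam c w : I -> R) (B : R).
Hypotheses (lam_ge0 : forall i, 0 <= lam i) (lam_sum1 : \sum_i lam i = 1)
  (budget : \sum_i lam i * c i <= B).
Let W := \sum_i lam i * w i.
Let F i := c i <= B.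

Lemma sum_splitF (g : I -> R) :
  \sum_(i | F i) lam i * g i + \sum_(i | ~~ F i) lam i * g i = \sum_i lam i * g i.
Proof. by rewrite [RHS](bigID F). Qed.

Lemma wsum_shift (g : I -> R) (a : R) :
  \sum_i lam i * (g i + a) = \sum_i lam i * g i + a.
Proof.
under eq_bigr do rewrite mulrDr.
by rewrite big_split /= -mulr_suml lam_sum1 mul1r.
Qed.

Let LF := \sum_(i | F i) lam i.
Let LI := \sum_(i | ~~ F i) lam i.
Let DF := \sum_(i | F i) lam i * (w i - W).
Let DI := \sum_(i | ~~ F i) lam i * (w i - W).
Let AF := \sum_(i | F i) lam i * (B - c i).
Let AI := \sum_(i | ~~ F i) lam i * (B - c i).

Lemma budget_split : [/\ LF + LI = 1, DF + DI = 0 & 0 <= AF + AI].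
Proof.
split; first by rewrite -lam_sum1 [RHS](bigID F).
  by rewrite sum_splitF wsum_shift /W subrr.
rewrite sum_splitF; under eq_bigr do rewrite addrC; rewrite wsum_shift.
by under eq_bigr do rewrite mulrN; rewrite sumrN addrC subr_ge0.
Qed.

Lemma affordable_weight_gt0 : 0 < LF.
Proof.
have [LE _ AE] := budget_split.
rewrite ltNge; apply/negP => LF_le0.
have : AF = 0 by apply: wsumr_eq0.
suff : AI < 0 by lra.
by apply: wsumr_lt0 => // [j|]; [rewrite /F -ltNge subr_lt0 | rewrite -/LI; lra].
Qed.

(* Summing the pair condition over F x ~F with weights lam i * lam j yields a
   quantity that is both negative and, by the budget and the definition of W,
   nonnegative. *)
Lemma no_budget_pair :
  (forall i, F i -> w i < W) ->
  (forall i j, F i -> ~~ F j -> (c j - B) * (w i - W) + (B - c i) * (w j - W) < 0) ->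
  False.
Proof.
move=> wF pair_lt0; have [LE DE AE] := budget_split.
have DF_lt0 : DF < 0.
  by apply: wsumr_lt0 (affordable_weight_gt0) => // i /wF; rewrite subr_lt0.
have LI_gt0 : 0 < LI.
  rewrite ltNge; apply/negP => LI_le0.
  have : DI = 0 by apply: wsumr_eq0.
  lra.
have inner j : ~~ F j -> (c j - B) * DF + AF * (w j - W) < 0.
  move=> Fj.
  have -> : (c j - B) * DF + AF * (w j - W) =
      \sum_(i | F i) lam i * ((c j - B) * (w i - W) + (B - c i) * (w j - W)).
    by rewrite /DF /AF mulr_sumr mulr_suml -big_split; apply: eq_bigr => i _ /=; ring.
  by apply: wsumr_lt0 (affordable_weight_gt0) => // i Fi; apply: pair_lt0.
have : \sum_(j | ~~ F j) lam j * ((c j - B) * DF + AF * (w j - W)) < 0.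
  exact: wsumr_lt0.
have -> : \sum_(j | ~~ F j) lam j * ((c j - B) * DF + AF * (w j - W)) =
    - AI * DF + AF * DI.
  have -> : - AI * DF + AF * DI =
      \sum_(j | ~~ F j) (- (lam j * (B - c j)) * DF + AF * (lam j * (w j - W))).
    by rewrite big_split /= -mulr_suml -mulr_sumr sumrN.
  by apply: eq_bigr => j _; ring.
nra.
Qed.

Lemma two_point_reduction : exists i j t,
  [/\ 0 <= t <= 1, mix t (c i) (c j) <= B & W <= mix t (w i) (w j)].
Proof.
case: (pselect (exists i, F i /\ W <= w i)) => [[i [Fi Wi]]|no_single].
  by exists i, i, 1; rewrite !mix1 ler01 lexx.
case: (pselect (exists i j, [/\ F i, ~~ F j &
    0 <= (c j - B) * (w i - W) + (B - c i) * (w j - W)])) => [[i [j [Fi Fj pair_ge0]]]|no_pair].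
  have cij : c i <= B < c j by rewrite -ltNge in Fj; apply/andP.
  by have [t ht] := mix_at_budget cij pair_ge0; exists i, j, t.
exfalso; apply: no_budget_pair => [i Fi|i j Fi Fj].
  by rewrite ltNge; apply/negP => Wi; apply: no_single; exists i.
by rewrite ltNge; apply/negP => pair_ge0; apply: no_pair; exists i, j.
Qed.

End TwoPointReduction.
End Mixtures.

Section Bundles.
Variables (R : realType) (m : nat) (tau : 'I_m -> R).
Hypothesis tau_ge0 : forall j, 0 <= tau j.
Local Notation v := (linval tau).

Lemma cube0 : cube (fun _ : 'I_m => 0 : R).
Proof. by move=> j; rewrite lexx ler01. Qed.

Definition vmix (t : R) (f g : 'I_m -> R) : 'I_m -> R := fun j => mix t (f j) (g j).

Lemma cube_vmix t f g : 0 <= t <= 1 -> cube f -> cube g -> cube (vmix t f g).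
Proof.
move=> t01 cf cg j; have [/andP [f0 f1] /andP [g0 g1]] := (cf j, cg j).
by apply/andP; split; [apply: mix_ge | apply: mix_le].
Qed.

Lemma linval_vmix t f g : v (vmix t f g) = mix t (v f) (v g).
Proof.
by rewrite /linval /vmix /mix !mulr_sumr -big_split; apply: eq_bigr => j _ /=; ring.
Qed.

Lemma linval_sum k (lam : 'I_k -> R) (xs : 'I_k -> 'I_m -> R) :
  v (fun j => \sum_(i < k) lam i * xs i j) = \sum_i lam i * v (xs i).
Proof.
rewrite /linval; under eq_bigr do rewrite mulr_sumr.
rewrite exchange_big /=; apply: eq_bigr => i _; rewrite mulr_sumr.
by apply: eq_bigr => j _; ring.
Qed.

Lemma linval_le_sum x : cube x -> v x <= \sum_j tau j.
Proof. by move=> cx; apply: ler_sum => j _; rewrite ler_piMr //; case/andP: (cx j). Qed.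

Lemma linval_dist f g d :
  (forall j, `|f j - g j| <= d) -> `|v f - v g| <= d * \sum_j tau j.
Proof.
move=> fg; rewrite /linval -sumrB mulr_sumr.
apply: le_trans (ler_norm_sum _ _ _) _; apply: ler_sum => j _.
by rewrite -mulrBr normrM ger0_norm // mulrC ler_wpM2r.
Qed.

End Bundles.

Arguments cube0 {R m}.

Section ConvexHull.
Variables (R : realType) (m : nat) (p : ('I_m -> R) -> R).
Hypothesis pf : pricing_function p.
Local Notation ph := (conv p).

Lemma pricing_ge0 x : cube x -> 0 <= p x.
Proof. by case: pf => p_ge0 _ _; apply: p_ge0. Qed.

Lemma conv_upper_self x : cube x -> conv_upper p x (p x).
Proof.
move=> cx; exists 1%N, (fun _ => 1), (fun _ => x); split.
- by move=> _; rewrite lexx ler01.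
- by rewrite big_ord1.
- by [].
- by apply: funext => j; rewrite big_ord1 mul1r.
- by rewrite big_ord1 mul1r.
Qed.

Lemma conv_upper_ge0 x y : conv_upper p x y -> 0 <= y.
Proof.
move=> [k [lam [xs [lam01 _ cxs _ le_y]]]]; apply: le_trans le_y.
by apply: sumr_ge0 => i _; rewrite mulr_ge0 ?pricing_ge0 //; case/andP: (lam01 i).
Qed.

Lemma has_inf_conv_upper x : cube x -> has_inf (conv_upper p x).
Proof.
by move=> cx; split; [exists (p x); apply: conv_upper_self | exists 0 => y /conv_upper_ge0].
Qed.

Lemma conv_ge0 x : cube x -> 0 <= ph x.
Proof.
move=> cx; apply: lb_le_inf; first by exists (p x); apply: conv_upper_self.
by move=> y /conv_upper_ge0.
Qed.

Lemma conv_le_upper x y : cube x -> conv_upper p x y -> ph x <= y.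
Proof. by move=> cx; apply: ge_inf; case: (has_inf_conv_upper cx). Qed.

Lemma conv_le x : cube x -> ph x <= p x.
Proof. by move=> cx; apply/conv_le_upper/conv_upper_self. Qed.

Lemma conv_vmix_le t f g : 0 <= t <= 1 -> cube f -> cube g ->
  ph (vmix t f g) <= mix t (p f) (p g).
Proof.
move=> t01 cf cg; apply: conv_le_upper; first exact: cube_vmix.
have /andP [t0 t1] := t01.
exists 2%N, (fun i : 'I_2 => if i == ord0 then t else 1 - t),
  (fun i : 'I_2 => if i == ord0 then f else g); split.
- by case=> [[|[|]]] //= _; apply/andP; split; lra.
- by rewrite big_ord_recl big_ord1 /=; ring.
- by case=> [[|[|]]].
- by apply: funext => j; rewrite big_ord_recl big_ord1.
- by rewrite big_ord_recl big_ord1.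
Qed.

Lemma conv_approx x e : cube x -> 0 < e -> exists k (lam : 'I_k -> R) xs,
  [/\ forall i, 0 <= lam i, \sum_i lam i = 1, forall i, cube (xs i),
      x = (fun j => \sum_(i < k) lam i * xs i j)
    & \sum_i lam i * p (xs i) <= ph x + e].
Proof.
move=> cx e0; have [y [k [lam [xs [lam01 lam1 cxs -> le_y]]]] y_lt] :=
  inf_adherent e0 (has_inf_conv_upper cx).
exists k, lam, xs; split => //; first by move=> i; case/andP: (lam01 i).
exact/(le_trans le_y)/ltW.
Qed.

Lemma lower_continuous_approx f e : lower_continuous p -> cube f -> 0 < e ->
  exists2 d, 0 < d & forall g, cube g -> (forall j, `|g j - f j| <= d) -> p f - e < p g.
Proof.
move=> plc cf e0.
pose T d := [set p x | x in [set x | cube x /\ forall j, `|x j - f j| <= d]].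
have T_ge0 d y : T d y -> 0 <= y by move=> [x [cx _] <-]; apply: pricing_ge0.
have has_sup_T : has_sup [set inf (T d) | d in [set d : R | 0 < d]].
  split; first by exists (inf (T 1)), 1; rewrite //= ltr01.
  exists (p f) => _ [d d0 <-]; apply: ge_inf; first by exists 0 => y /T_ge0.
  by exists f => //; split => // j; rewrite subrr normr0 ltW.
have [_ [d d0 <-] Td_gt] := sup_adherent e0 has_sup_T.
exists d => // g cg gd.
rewrite (plc f cf); apply: (lt_le_trans Td_gt); apply: ge_inf.
  by exists 0 => y /T_ge0.
by exists g.
Qed.

End ConvexHull.

Section OptimalPair.
Variables (R : realType) (m : nat) (tau : 'I_m -> R) (p : ('I_m -> R) -> R).
Hypotheses (tau_ge0 : forall j, 0 <= tau j) (pf : pricing_function p)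
  (plc : lower_continuous p).
Local Notation v := (linval tau).

Local Notation pair_space := (R * 'rV[R]_m * 'rV[R]_m)%type.

Definition pair_of t (f g : 'I_m -> R) : pair_space := ((t, \row_j f j), \row_j g j).
Definition weight (z : pair_space) := z.1.1.
Definition fst_bundle (z : pair_space) := fun j => z.1.2 ord0 j.
Definition snd_bundle (z : pair_space) := fun j => z.2 ord0 j.
Definition pair_cost (z : pair_space) := mix (weight z) (p (fst_bundle z)) (p (snd_bundle z)).
Definition pair_value (z : pair_space) := mix (weight z) (v (fst_bundle z)) (v (snd_bundle z)).

Definition row_cube : set 'rV[R]_m := [set r | forall j, `[0, 1]%classic (r ord0 j)].
Definition pairs : set pair_space := `[0, 1]%classic `*` row_cube `*` row_cube.

Lemma pairs_compact : compact pairs.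
Proof.
have cube_compact : compact row_cube := rV_compact (fun _ => @segment_compact R 0 1).
by apply: compact_setX => //; apply: compact_setX => //; apply: segment_compact.
Qed.

Lemma pairsP z :
  pairs z <-> [/\ 0 <= weight z <= 1, cube (fst_bundle z) & cube (snd_bundle z)].
Proof.
case: z => [[t f] g]; rewrite /pairs /row_cube /weight /fst_bundle /snd_bundle /=.
split => [[[t01 cf] cg]|[t01 cf cg]].
  by split; [move: t01 | move=> j; move: (cf j) | move=> j; move: (cg j)]; rewrite /= in_itv.
by split; [split|] => [|j|j]; rewrite in_itv /=; [exact: t01 | exact: cf | exact: cg].
Qed.

Lemma pair_ofK t f g :
  [/\ weight (pair_of t f g) = t, fst_bundle (pair_of t f g) = f
    & snd_bundle (pair_of t f g) = g].
Proof. by split; rewrite //; apply: funext => j; rewrite /fst_bundle /snd_bundle mxE. Qed.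

Lemma ball_pair (z w : pair_space) (d : R) : ball z d w ->
  [/\ `|weight z - weight w| < d, forall j, `|fst_bundle z j - fst_bundle w j| < d
    & forall j, `|snd_bundle z j - snd_bundle w j| < d].
Proof.
case: z w => [[t f] g] [[t' f'] g'] [[/= tt' [_ ff']] [_ gg']].
by split=> // j; [apply: (ff' ord0 j) | apply: (gg' ord0 j)].
Qed.

Lemma pair_cost_lsc z eta : pairs z -> 0 < eta ->
  exists2 d, 0 < d & forall w, pairs w -> ball z d w -> pair_cost z - eta <= pair_cost w.
Proof.
move=> /pairsP [t01 cf cg] eta0; have eta2 : 0 < eta / 2 by rewrite divr_gt0.
have [d1 d10 near_f] := lower_continuous_approx pf plc cf eta2.
have [d2 d20 near_g] := lower_continuous_approx pf plc cg eta2.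
have [d3 d30 small_t] := mul_small (normr_ge0 (p (fst_bundle z) - p (snd_bundle z))) eta2.
pose d := Num.min d1 (Num.min d2 d3).
have [d_le1 d_le2 d_le3] : [/\ d <= d1, d <= d2 & d <= d3].
  by rewrite /d !ge_min !lexx !orbT.
exists d => [|w /pairsP [tw01 cfw cgw] /ball_pair [/ltW dt df dg]].
  by rewrite !lt_min d10 d20 d30.
have pf_w : p (fst_bundle z) - eta / 2 <= p (fst_bundle w).
  by apply/ltW/near_f => // j; rewrite distrC (le_trans (ltW (df j))).
have pg_w : p (snd_bundle z) - eta / 2 <= p (snd_bundle w).
  by apply/ltW/near_g => // j; rewrite distrC (le_trans (ltW (dg j))).
have /andP [dt_ge _] : - (eta / 2) <=
    (weight w - weight z) * (p (fst_bundle z) - p (snd_bundle z)) <= eta / 2.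
  by rewrite -ler_norml normrM small_t // distrC (le_trans dt).
have := mix_perturb (weight z) (weight w) (p (fst_bundle z)) (p (snd_bundle z))
  (p (fst_bundle w)) (p (snd_bundle w)).
have : - (eta / 2) <= mix (weight w) (p (fst_bundle w) - p (fst_bundle z))
    (p (snd_bundle w) - p (snd_bundle z)) by apply: mix_ge => //; lra.
rewrite /pair_cost; lra.
Qed.

Lemma pair_value_continuous z eta : pairs z -> 0 < eta ->
  exists2 d, 0 < d & forall w, pairs w -> ball z d w ->
    `|pair_value w - pair_value z| <= eta.
Proof.
move=> /pairsP [t01 cf cg] eta0; have eta2 : 0 < eta / 2 by rewrite divr_gt0.
have S0 : 0 <= \sum_j tau j by apply: sumr_ge0 => j _.
have [d1 d10 small_x] := mul_small S0 eta2.
have [d2 d20 small_t] := mul_small (normr_ge0 (v (fst_bundle z) - v (snd_bundle z))) eta2.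
pose d := Num.min d1 d2.
have [d_le1 d_le2] : d <= d1 /\ d <= d2 by rewrite /d !ge_min !lexx !orbT.
exists d => [|w /pairsP [tw01 cfw cgw] /ball_pair [/ltW dt df dg]].
  by rewrite lt_min d10 d20.
have near_v (f f' : 'I_m -> R) : (forall j, `|f j - f' j| < d) -> `|v f' - v f| <= eta / 2.
  move=> ff'; have ff'1 j : `|f' j - f j| <= d1.
    by rewrite distrC (le_trans (ltW (ff' j))).
  apply: le_trans (linval_dist tau_ge0 ff'1) _.
  by have := small_x d1; rewrite gtr0_norm //; apply.
have /andP [dt_ge dt_le] : - (eta / 2) <=
    (weight w - weight z) * (v (fst_bundle z) - v (snd_bundle z)) <= eta / 2.
  by rewrite -ler_norml normrM small_t // distrC (le_trans dt).
have := norm_mix_le tw01 (near_v _ _ df) (near_v _ _ dg).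
rewrite /pair_value mix_perturb ler_norml => /andP [mix_ge mix_le].
by rewrite ler_norml; apply/andP; split; lra.
Qed.

Variables (b U : R).
Hypothesis conv_near_sup :
  forall e, 0 < e -> exists2 y, feasible (conv p) b y & U - e < v y - conv p y.

Definition near_optimal_pairs e : set pair_space :=
  [set z | [/\ pairs z, pair_cost z <= b + e & U - e <= pair_value z - pair_cost z]].

Lemma near_optimal_pairs_neq0 e : 0 < e -> near_optimal_pairs e !=set0.
Proof.
move=> e0; have e2 : 0 < e / 2 by rewrite divr_gt0.
have [y [cy y_b] y_U] := conv_near_sup e2.
have [k [lam [xs [lam0 lam1 cxs y_eq cost_y]]]] := conv_approx pf cy e2.
have [i [j [t [t01 cost_ij value_ij]]]] := two_point_reduction
  (fun i => v (xs i) - p (xs i)) lam0 lam1 (le_trans cost_y (lerD y_b (lexx _))).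
exists (pair_of t (xs i) (xs j)); rewrite /near_optimal_pairs /pair_cost /pair_value /=.
have [-> -> ->] := pair_ofK t (xs i) (xs j); split.
- by apply/pairsP; have [-> -> ->] := pair_ofK t (xs i) (xs j).
- by move: cost_ij; lra.
- have : \sum_i lam i * (v (xs i) - p (xs i)) = v y - \sum_i lam i * p (xs i).
    by rewrite y_eq linval_sum -sumrB; apply: eq_bigr => i' _; rewrite mulrBr.
  by move: value_ij; rewrite mixB; lra.
Qed.

Lemma optimal_pair : exists t f g, [/\ 0 <= t <= 1, cube f, cube g,
  mix t (p f) (p g) <= b & U <= mix t (v f) (v g) - mix t (p f) (p g)].
Proof.
pose F := filter_from [set e : R | 0 < e] near_optimal_pairs.
have near_optimal_pairsS e e' : e <= e' -> near_optimal_pairs e `<=` near_optimal_pairs e'.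
  by move=> ee' z [pz cost value]; split => //; lra.
have F_proper : ProperFilter F.
  apply: filter_from_proper => [|e /near_optimal_pairs_neq0 //].
  apply: filter_from_filter; first by exists 1; rewrite /= ltr01.
  move=> e1 e2 e10 e20; exists (Num.min e1 e2); first by rewrite /= lt_min e10 e20.
  by move=> z nz; split; apply: near_optimal_pairsS nz; rewrite ge_min lexx ?orbT.
have [z [pz z_cluster]] : exists z, pairs z /\ cluster F z.
  by apply: pairs_compact; exists 1; [rewrite /= ltr01 | move=> z []].
have z_near_opt eta : 0 < eta ->
    pair_cost z <= b + 2 * eta /\ U - 3 * eta <= pair_value z - pair_cost z.
  move=> eta0.
  have [d1 d10 cost_lsc] := pair_cost_lsc pz eta0.
  have [d2 d20 value_cont] := pair_value_continuous pz eta0.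
  pose d := Num.min d1 d2.
  have [d_le1 d_le2] : d <= d1 /\ d <= d2 by rewrite /d !ge_min !lexx orbT.
  have d0 : 0 < d by rewrite lt_min d10 d20.
  have [w [[pw cost_w value_w] /[dup] /(le_ball d_le1) zw1 /(le_ball d_le2) zw2]] :=
    z_cluster _ _ (ex_intro2 _ _ eta eta0 (fun _ h => h)) (nbhsx_ballx z _ d0).
  have := cost_lsc w pw zw1; have := value_cont w pw zw2.
  by rewrite ler_norml => /andP [v1 v2] c1; split; lra.
have [t01 cf cg] := (pairsP z).1 pz.
exists (weight z), (fst_bundle z), (snd_bundle z); split => //.
- apply/ler_addgt0Pr => e e0; have e2 : 0 < e / 2 by rewrite divr_gt0.
  by have [+ _] := z_near_opt _ e2; rewrite /pair_cost; lra.
- apply/ler_addgt0Pr => e e0; have e3 : 0 < e / 3 by rewrite divr_gt0.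
  by have [_ +] := z_near_opt _ e3; rewrite /pair_value /pair_cost; lra.
Qed.

End OptimalPair.

Section Demand.
Variables (R : realType) (m : nat) (v : ('I_m -> R) -> R) (b : R).

Lemma ustar_fin_num (q : ('I_m -> R) -> R) x0 M : feasible q b x0 ->
  (forall x, feasible q b x -> v x - q x <= M) -> exists U, ustar q v b = U%:E.
Proof.
move=> Fx0 le_M; have : ((v x0 - q x0)%:E <= ustar q v b)%E.
  by apply: ereal_sup_ubound; exists x0.
have : (ustar q v b <= M%:E)%E by apply: ge_ereal_sup => _ [x Fx <-]; rewrite lee_fin le_M.
by case: (ustar q v b) => [U _ _|//|//]; exists U.
Qed.

Section FiniteOptimum.
Variables (q : ('I_m -> R) -> R) (U : R).
Hypothesis ustarE : ustar q v b = U%:E.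

Lemma ustar_ub x : feasible q b x -> v x - q x <= U.
Proof. by move=> Fx; rewrite -lee_fin -ustarE; apply: ereal_sup_ubound; exists x. Qed.

Lemma ustar_near e : 0 < e -> exists2 y, feasible q b y & U - e < v y - q y.
Proof.
move=> e0; have : ((U - e)%:E < ustar q v b)%E by rewrite ustarE lte_fin gtrDl oppr_lt0.
by move=> /ereal_sup_gt [_ [y Fy <-]]; rewrite lte_fin; exists y.
Qed.

Lemma demand_of_ge x : feasible q b x -> U <= v x - q x -> demand q v b x.
Proof.
move=> Fx le_U; split => //; rewrite ustarE; congr (_%:E).
by apply/eqP; rewrite eq_le ustar_ub.
Qed.

End FiniteOptimum.

Lemma revenue_le (q q' : ('I_m -> R) -> R) :
  (forall x, demand q v b x -> exists2 y, demand q' v b y & q x <= q' y) ->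
  (revenue q v b <= revenue q' v b)%E.
Proof.
move=> dominated; apply: ge_ereal_sup => _ [x Dx <-].
have [y Dy le_xy] := dominated x Dx.
by apply: le_ereal_sup_tmp; exists (q' y)%:E; [exists y | rewrite lee_fin].
Qed.

End Demand.

Section ConvexRevenue.
Variables (R : realType) (m : nat) (tau : 'I_m -> R) (p : ('I_m -> R) -> R) (b U : R).
Hypotheses (pf : pricing_function p)
  (ustarE : ustar (conv p) (linval tau) b = U%:E).
Local Notation v := (linval tau).

Lemma vmix_utility_le t f g : 0 <= t <= 1 -> cube f -> cube g ->
  mix t (p f) (p g) <= b -> mix t (v f) (v g) - mix t (p f) (p g) <= U.
Proof.
move=> t01 cf cg cost; have conv_y := conv_vmix_le pf t01 cf cg.
have := ustar_ub ustarE (conj (cube_vmix t01 cf cg) (le_trans conv_y cost)).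
by rewrite linval_vmix; lra.
Qed.

Lemma vmix_demand t f g : 0 <= t <= 1 -> cube f -> cube g ->
  mix t (p f) (p g) <= b -> U <= mix t (v f) (v g) - mix t (p f) (p g) ->
  demand (conv p) v b (vmix t f g) /\ conv p (vmix t f g) = mix t (p f) (p g).
Proof.
move=> t01 cf cg cost value; have conv_y := conv_vmix_le pf t01 cf cg.
have Fy : feasible (conv p) b (vmix t f g).
  by split; [apply: cube_vmix | apply: le_trans conv_y cost].
have := ustar_ub ustarE Fy; rewrite linval_vmix => ub_y.
split; first by apply: (demand_of_ge ustarE Fy); rewrite linval_vmix; lra.
by apply/eqP; rewrite eq_le conv_y /=; lra.
Qed.

End ConvexRevenue.

Theorem mainTheorem16 (R : realType) (m : nat) (tau : 'I_m -> R) (b : R)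
    (p : ('I_m -> R) -> R) :
  (forall j, 0 <= tau j) -> 0 <= b ->
  pricing_function p -> lower_continuous p ->
  (revenue p (linval tau) b <= revenue (conv p) (linval tau) b)%E.
Proof.
move=> tau_ge0 b_ge0 pf plc.
have [U ustarE] : exists U, ustar (conv p) (linval tau) b = U%:E.
  apply: (@ustar_fin_num _ _ _ _ _ (fun _ => 0) (\sum_j tau j)).
    split; first exact: cube0.
    by case: (pf) => _ _ p0; rewrite (le_trans (conv_le pf cube0)) ?p0.
  by move=> x [cx _]; have := conv_ge0 pf cx; have := linval_le_sum tau_ge0 cx; lra.
apply: revenue_le => x [[cx px_b] ustar_pE].
have x_opt z : feasible p b z -> linval tau z - p z <= linval tau x - p x.
  by apply: ustar_ub; rewrite ustar_pE.
have Fx : feasible (conv p) b x by split => //; apply: le_trans (conv_le pf cx) px_b.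
have := ustar_ub ustarE Fx; have := conv_le pf cx.
case: (lerP U (linval tau x - p x)) => [U_le|U_gt] conv_x ub_x.
  by exists x; [apply: (demand_of_ge ustarE Fx) | ]; lra.
have [t [f [g [t01 cf cg cost value]]]] := optimal_pair tau_ge0 pf plc (ustar_near ustarE).
have [Dy conv_yE] := vmix_demand pf ustarE t01 cf cg cost value.
exists (vmix t f g) => //; rewrite conv_yE (le_trans px_b) //.
apply: (mix_exhausts_budget t01 U_gt _ _ value) => [pfb|pgb|s s01 s_cost].
- exact: x_opt.
- exact: x_opt.
- exact: (vmix_utility_le pf ustarE).
Qed.
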